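(* In the setting below, for every mask $m\in\{0,1\}^{|\mathrm H|}$, $$\Delta\mathcal L\le\sum_{h=1}^{|\mathrm H|}(1-m_h)\,\mathrm{HIS}_h+\frac{c}{2}\,\|W^O\|_2^2\sum_{h=1}^{|\mathrm H|}(1-m_h)\,\mathbb E_{x\sim\mathcal D}\bigl[\|A_h(x)\|_F^2\bigr],$$ with $c=\tfrac14$ if $\ell$ is binary (sigmoid) cross-entropy (so the coefficient is $\tfrac18\|W^O\|_2^2$) and $c=\tfrac12$ if $\ell$ is multiclass softmax cross-entropy (so the coefficient is $\tfrac14\|W^O\|_2^2$).
   Context: Setting: a multi-head attention layer with $|\mathrm H|$ heads; for each input $x\sim\mathcal D$, head $h$ outputs $A_h(x)\in\mathbb R^{n\times d_v}$ over $n$ tokens and $\mathbf y(x)=\operatorname{Concat}(A_1(x),\dots,A_{|\mathrm H|}(x))\in\mathbb R^{n\times d}$, $d=|\mathrm H|d_v$. For a mask $m\in\{0,1\}^{|\mathrm H|}$, $\mathbf y_m(x)=\operatorname{Concat}(m_1A_1(x),\dots,m_{|\mathrm H|}A_{|\mathrm H|}(x))$. The loss is $\mathcal L(x,\mathbf y)=\frac1n\sum_{t=1}^n\ell\bigl(\mathbf y(t)W^O;c_t(x)\bigr)$, where $\mathbf y(t)$ is the $t$-th row, $W^O\in\mathbb R^{d\times C}$ is a fixed output projection ($C=1$ in the binary case), $c_t(x)$ are labels and $\ell$ is binary cross-entropy $\ell(z;c)=-c\log\sigma(z)-(1-c)\log(1-\sigma(z))$ or multiclass cross-entropy $\ell(\mathbf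 z;c)=-\log\mathrm{softmax}(\mathbf z)_c$. Token-averaged Frobenius inner product/norm: $\langle U,V\rangle_F=\frac1n\sum_{i}\langle U(i),V(i)\rangle$, $\|U\|_F^2=\langle U,U\rangle_F$. $\mathrm{HIS}_h=\mathbb E_{x\sim\mathcal D}|\langle\nabla_{A_h}\mathcal L(x,\mathbf y(x)),A_h(x)\rangle_F|$ (gradient w.r.t. the token-averaged inner product), $\Delta\mathcal L=\mathbb E_{x\sim\mathcal D}[\mathcal L(x,\mathbf y_m(x))-\mathcal L(x,\mathbf y(x))]$; all expectations assumed finite. $\|W^O\|_2$ is the spectral norm. *)

From HB Require Import structures.
From mathcomp Require Import all_boot all_order all_algebra.
From mathcomp Require Import all_classical all_reals all_analysis.
Set Implicit Arguments. Unset Strict Implicit. Unset Printing Implicit Defensive.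
Import Order.TTheory GRing.Theory Num.Theory.
Local Open Scope ring_scope.
Local Open Scope classical_set_scope.

Section Defs.
Variable R : realType.

Definition sigm (z : R) : R := (1 + expR (- z))^-1.

Definition bce (z : 'rV[R]_1) (c : bool) : R :=
  - ((c%:R) * ln (sigm (z 0 0))) - (1 - c%:R) * ln (1 - sigm (z 0 0)).

Definition ce (C : nat) (z : 'rV[R]_C) (c : 'I_C) : R :=
  - ln (expR (z 0 c) / \sum_(j < C) expR (z 0 j)).

(* the two admissible losses together with their constant c *)
Inductive xent_loss : forall (C : nat) (Lab : Type), ('rV[R]_C -> Lab -> R) -> R -> Prop :=
| xent_binary : xent_loss bce (4^-1)
| xent_multi (C : nat) : xent_loss (@ce C) (2^-1).

Definition vnorm (k : nat) (v : 'rV[R]_k) : R := Num.sqrt (\sum_(j < k) v 0 j ^+ 2).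
Definition specnorm (d C : nat) (W : 'M[R]_(d, C)) : R :=
  sup [set r : R | exists v : 'rV[R]_d, vnorm v = 1 /\ r = vnorm (v *m W)].

Definition frob_inner (n k : nat) (U V : 'M[R]_(n, k)) : R :=
  (n%:R)^-1 * \sum_(i < n) \sum_(j < k) U i j * V i j.
Definition frob_norm2 (n k : nat) (U : 'M[R]_(n, k)) : R := frob_inner U U.

(* masked concatenation of heads: row t is Concat(m_1 A_1(t), ..., m_H A_H(t)) *)
Definition concat_mask (n nH dv : nat) (m : 'I_nH -> bool)
  (A : 'I_nH -> 'M[R]_(n, dv)) : 'M[R]_(n, nH * dv) :=
  \matrix_(t < n) mxvec (\matrix_(h < nH, k < dv) ((m h)%:R * A h t k)).

Definition concat (n nH dv : nat) (A : 'I_nH -> 'M[R]_(n, dv)) : 'M[R]_(n, nH * dv) :=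
  concat_mask (fun _ => true) A.

Definition loss (n d C : nat) (Lab : Type) (ell : 'rV[R]_C -> Lab -> R)
  (W : 'M[R]_(d, C)) (c : 'I_n -> Lab) (Y : 'M[R]_(n, d)) : R :=
  (n%:R)^-1 * \sum_(t < n) ell (row t Y *m W) (c t).

Definition perturb (n nH dv : nat) (A : 'I_nH -> 'M[R]_(n, dv)) (h : 'I_nH)
  (i : 'I_n) (k : 'I_dv) (s : R) : 'I_nH -> 'M[R]_(n, dv) :=
  fun h' => if h' == h then A h + s *: delta_mx i k else A h'.

(* gradient of L(x, Concat(A_1..A_H)) w.r.t. A_h, taken with respect to the
   token-averaged inner product: G(i,k) = n * dL/dA_h(i,k) *)
Definition grad_head (n nH dv C : nat) (Lab : Type) (ell : 'rV[R]_C -> Lab -> R)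
  (W : 'M[R]_(nH * dv, C)) (c : 'I_n -> Lab) (A : 'I_nH -> 'M[R]_(n, dv))
  (h : 'I_nH) : 'M[R]_(n, dv) :=
  \matrix_(i < n, k < dv)
    (n%:R * derive1 (fun s : R => loss ell W c (concat (perturb A h i k s))) 0).

End Defs.

(* Both cross-entropies are convex and smooth in the logits: with g the gradient,
   0 <= ell (z + u) - ell z - <g, u> <= c/2 |u|^2.  For the softmax loss the gap is the
   centred log-moment generating function of u under the distribution softmax(z):
   Jensen makes it nonnegative and Hoeffding's lemma bounds it by (max u - min u)^2 / 8,
   which is at most |u|^2 / 4 (and is w^2 / 8 for the binary loss, where the distribution
   is Bernoulli).  Masking head h moves row t of the concatenated output by -(1 - m_h) A_h(t),
   hence the logits by that row times W^O, of squared norm at most ||W^O||^2 times the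
   masked squared head norms; by the chain rule the linear term is the sum over masked
   heads of -<grad_{A_h} L, A_h>_F, at most its absolute value. *)

From mathcomp Require Import all_boot all_order all_algebra.
From mathcomp Require Import all_classical all_reals all_analysis.
From mathcomp.algebra_tactics Require Import ring lra.
Import Order.TTheory GRing.Theory Num.Theory.
Import numFieldNormedType.Exports.
Local Open Scope ring_scope.
Local Open Scope classical_set_scope.

Set Implicit Arguments. Unset Strict Implicit. Unset Printing Implicit Defensive.

Section Calculus.
Variable R : realType.

Lemma derivable_continuous_segment (f df : R -> R) (a b : R) :
  (forall x, is_derive x (1:R) f (df x)) -> {within `[a, b], continuous f}.
Proof.
move=> Df; apply: continuous_subspaceT => x.
by apply/differentiable_continuous/derivable1_diffP; case: (Df x).
Qed.

Lemma nondecreasing_of_derive_ge0 (f df : R -> R) :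
  (forall x, is_derive x (1:R) f (df x)) -> (forall x, 0 <= df x) ->
  {homo f : x y / x <= y}.
Proof.
move=> Df df_ge0 a b ab.
have [|c _ E] := MVT_segment ab (fun x _ => Df x).
  exact: derivable_continuous_segment Df.
by rewrite -subr_ge0 E mulr_ge0 // subr_ge0.
Qed.

Lemma ge_at_zero_of_derive_nondecreasing (g dg : R -> R) :
  (forall x, is_derive x (1:R) g (dg x)) -> {homo dg : x y / x <= y} ->
  dg 0 = 0 -> forall h, g 0 <= g h.
Proof.
move=> Dg dg_homo dg0 h.
have Dg_seg a b : {within `[a, b], continuous g}.
  exact: derivable_continuous_segment Dg.
have [h0|h0] := leP 0 h.
  have [|c /andP[c0 _] E] := MVT_segment h0 (fun x _ => Dg x) => //.
  by rewrite -subr_ge0 E subr0 mulr_ge0 // -dg0 dg_homo.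
have [|c /andP[_ ch] E] := MVT_segment (ltW h0) (fun x _ => Dg x) => //.
have dgc : dg c <= 0 by rewrite -dg0 dg_homo.
by rewrite -subr_le0 E sub0r mulr_le0_ge0 // oppr_ge0 ltW.
Qed.

Lemma le_taylor1_of_derive2_le (f df d2f : R -> R) (K : R) :
  (forall x, is_derive x (1:R) f (df x)) ->
  (forall x, is_derive x (1:R) df (d2f x)) ->
  (forall x, d2f x <= K) ->
  forall h, f h <= f 0 + df 0 * h + K / 2 * h ^+ 2.
Proof.
move=> Df Ddf d2fK h.
pose dg : R -> R := K \*: id + cst (df 0) - df.
have Ddg x : is_derive x (1:R) dg (K - d2f x).
  by apply: is_derive_eq; rewrite addr0; congr (_ - _); exact: mulr1.
have dgE y : dg y = K * y + df 0 - df y by [].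
pose g : R -> R := (K / 2) \*: (id * id) + df 0 \*: id + cst (f 0) - f.
have Dg x : is_derive x (1:R) g (dg x).
  have scaleE (a b : R) : a *: b = a * b by [].
  by apply: is_derive_eq; rewrite dgE /= !scaleE !mulr1 addr0; field.
have gE y : g y = K / 2 * (y * y) + df 0 * y + f 0 - f y by [].
suff : g 0 <= g h by rewrite !gE !mulr0 expr2; lra.
apply: (ge_at_zero_of_derive_nondecreasing Dg).
  by apply: (nondecreasing_of_derive_ge0 Ddg) => x; rewrite subr_ge0.
by rewrite dgE mulr0 add0r subrr.
Qed.

Lemma ln_bernoulli_mgf_le (q h : R) : 0 <= q <= 1 ->
  ln (1 - q + q * expR h) <= q * h + h ^+ 2 / 8.
Proof.
move=> /andP[q0 q1].
pose M : R -> R := cst (1 - q) + q \*: expR.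
have ME x : M x = 1 - q + q * expR x by [].
have M_gt0 x : 0 < M x.
  rewrite ME; have := mulr_ge0 q0 (expR_ge0 x).
  have [q_lt1|q_ge1] := ltP q 1; first lra.
  have -> : q = 1 by lra.
  by rewrite subrr add0r mul1r expR_gt0.
have DM x : is_derive x (1:R) M (q * expR x) by apply: is_derive_eq; rewrite add0r.
pose r : R -> R := (fun y => (M y)^-1) * (q \*: expR).
have rE x : r x = (M x)^-1 * (q * expR x) by [].
have Dlog x : is_derive x (1:R) ((@ln R) \o M) (r x).
  by rewrite rE; exact: is_derive1_comp (is_derive1_ln (M_gt0 x)) (DM x).
have Dr x : is_derive x (1:R) r (r x - r x ^+ 2).
  have DMV : is_derive x (1:R) (fun y => (M y)^-1) (- (M x) ^- 2 *: (q * expR x)).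
    by apply: is_deriveV; rewrite ?gt_eqF.
  have DMVexp := is_deriveM DMV (is_deriveZ q (is_derive_expR x)).
  have scaleE (a b : R) : a *: b = a * b by [].
  have qexpE : (q \*: expR) x = q * expR x by [].
  apply: is_derive_eq.
  by rewrite !rE !scaleE qexpE exprMn exprVn; ring.
(* [r x] lies in [0, 1], so [(ln M)'' = r - r^2] is a Bernoulli variance, at most 1/4. *)
have r_var x : r x - r x ^+ 2 <= 4^-1.
  by have := sqr_ge0 (r x - 2^-1); rewrite !expr2; lra.
have := le_taylor1_of_derive2_le Dlog Dr r_var h.
have r0 : r 0 = q by rewrite rE ME expR0 mulr1 subrK invr1 mul1r.
rewrite /= r0 !ME expR0 mulr1 subrK ln1 add0r.
by have -> : 4^-1 / 2 * h ^+ 2 = h ^+ 2 / 8 by field.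
Qed.

Lemma expR_le_chord (a b y : R) : a < b -> a <= y <= b ->
  expR y <= (b * expR a - a * expR b) / (b - a) + (expR b - expR a) / (b - a) * y.
Proof.
move=> ab /andP[ay yb].
have -> : (b * expR a - a * expR b) / (b - a) + (expR b - expR a) / (b - a) * y =
    ((b - y) * expR a + (y - a) * expR b) / (b - a).
  by field; rewrite gt_eqF // subr_gt0.
rewrite ler_pdivlMr ?subr_gt0 //.
have split_at_y z : expR z = expR y * expR (z - y) by rewrite -expRD subrKC.
rewrite (split_at_y a) (split_at_y b).
have ey := expR_gt0 y.
have by0 : 0 <= b - y by rewrite subr_ge0.
have ya0 : 0 <= y - a by rewrite subr_ge0.
have ka := ler_wpM2l (mulr_ge0 by0 (ltW ey)) (expR_ge1Dx (a - y)).
have kb := ler_wpM2l (mulr_ge0 ya0 (ltW ey)) (expR_ge1Dx (b - y)).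
nra.
Qed.

Lemma derive1_quadratic_remainder (phi : R -> R) (a K : R) :
  (forall s, `|phi s - phi 0 - s * a| <= K * s ^+ 2) -> derive1 phi 0 = a.
Proof.
move=> remainder; apply: cvg_lim => //; apply/cvgrPdist_lt => e e0.
have K1_gt0 : 0 < `|K| + 1 by rewrite ltr_wpDl.
near=> h.
have h_neq0 : h != 0 by near: h; exact: nbhs_dnbhs_neq.
have h_small : `|h| < e / (`|K| + 1).
  by near: h; apply: dnbhs0_lt; rewrite divr_gt0.
have h_gt0 : 0 < `|h| by rewrite normr_gt0.
have -> : a - h^-1 *: (phi (h + 0) - phi 0) = - (h^-1 * (phi h - phi 0 - h * a)).
  by rewrite addr0 /GRing.scale /=; field.
rewrite normrN normrM normfV ltr_pdivrMl //; apply: le_lt_trans (remainder h) _.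
rewrite ltr_pdivlMr // in h_small.
rewrite -(real_normK (num_real h)) expr2.
have := ler_norm K; nra.
Unshelve. all: by end_near.
Qed.

End Calculus.

Section FiniteDistribution.
Variables (R : realType) (I : finType) (p : I -> R).
Hypotheses (p_ge0 : forall i, 0 <= p i) (p_sum1 : \sum_i p i = 1).

Lemma mean_affine (v : I -> R) (a b : R) :
  \sum_i p i * (a + b * v i) = a + b * \sum_i p i * v i.
Proof.
under eq_bigr do rewrite mulrDr mulrCA.
by rewrite big_split /= -!mulr_sumr -mulr_suml p_sum1 mul1r.
Qed.

Lemma mean_in_range (v : I -> R) (a b : R) : (forall i, a <= v i <= b) ->
  a <= \sum_i p i * v i <= b.
Proof.
move=> vab; apply/andP; split.
  rewrite -[a]mul1r -p_sum1 mulr_suml; apply: ler_sum => i _.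
  by apply: ler_wpM2l => //; case/andP: (vab i).
rewrite -[b]mul1r -p_sum1 mulr_suml; apply: ler_sum => i _.
by apply: ler_wpM2l => //; case/andP: (vab i).
Qed.

Lemma expR_mean_le (v : I -> R) :
  expR (\sum_i p i * v i) <= \sum_i p i * expR (v i).
Proof.
set mu := \sum_i p i * v i.
have tangent i : expR mu * (1 - mu + v i) <= expR (v i).
  have -> : expR (v i) = expR mu * expR (v i - mu) by rewrite -expRD subrKC.
  by apply: ler_wpM2l; [exact: expR_ge0 | have := expR_ge1Dx (v i - mu); lra].
apply: le_trans (ler_sum _ (fun i _ => ler_wpM2l (p_ge0 i) (tangent i))).
under eq_bigr do rewrite mulrDr.
by rewrite mean_affine -/mu -mulrDr subrK mulr1.
Qed.

Lemma mean_expR_le_hoeffding (v : I -> R) (a b : R) : (forall i, a <= v i <= b) ->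
  \sum_i p i * expR (v i) <= expR (\sum_i p i * v i + (b - a) ^+ 2 / 8).
Proof.
move=> vab; set mu := \sum_i p i * v i.
have /andP[a_mu mu_b] : a <= mu <= b := mean_in_range vab.
have [ab|ba] := ltP a b; last first.
  have va i : v i = a by case/andP: (vab i) => ai ib; apply/le_anti; rewrite ai (le_trans ib).
  have mua : mu = a by apply/le_anti; rewrite a_mu (le_trans mu_b).
  under eq_bigr do rewrite va.
  rewrite -mulr_suml p_sum1 mul1r mua ler_expR lerDl.
  by rewrite mulr_ge0 ?sqr_ge0.
have ba0 : 0 < b - a by rewrite subr_gt0.
pose q := (mu - a) / (b - a).
have q01 : 0 <= q <= 1.
  apply/andP; split; first by apply: divr_ge0; lra.
  by rewrite ler_pdivrMr // mul1r lerD2r.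
apply: le_trans (ler_sum _ (fun i _ => ler_wpM2l (p_ge0 i) (expR_le_chord ab (vab i)))) _.
rewrite mean_affine -/mu.
have -> : (b * expR a - a * expR b) / (b - a) + (expR b - expR a) / (b - a) * mu =
    expR a * (1 - q + q * expR (b - a)).
  by rewrite /q expRB; field; rewrite !gt_eqF ?expR_gt0.
have -> : mu + (b - a) ^+ 2 / 8 = a + (q * (b - a) + (b - a) ^+ 2 / 8).
  by rewrite /q; field; rewrite gt_eqF.
rewrite [expR (a + _)]expRD; apply: ler_wpM2l; first exact: expR_ge0.
have mgf_gt0 : 0 < 1 - q + q * expR (b - a).
  by have := expR_gt0 (b - a); case/andP: q01 => q0 q1; nra.
by rewrite -ler_ln ?posrE ?expR_gt0 // expRK ln_bernoulli_mgf_le.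
Qed.

End FiniteDistribution.

Section CrossEntropy.
Variable R : realType.

Lemma exists_argmin_argmax (I : finType) (i0 : I) (u : I -> R) :
  exists j1 j2, forall k, u j1 <= u k <= u j2.
Proof.
case: (Order.TotalTheory.arg_minP u (erefl (xpredT i0))) => j1 _ min_j1.
case: (Order.TotalTheory.arg_maxP u (erefl (xpredT i0))) => j2 _ max_j2.
by exists j1, j2 => k; apply/andP; split; [exact: min_j1 | exact: max_j2].
Qed.

Lemma sum_sqr_ge0 (I : finType) (v : I -> R) : 0 <= \sum_i v i ^+ 2.
Proof. by apply: sumr_ge0 => i _; exact: sqr_ge0. Qed.

Lemma sqrB_le_2sum_sqr (I : finType) (u : I -> R) (j1 j2 : I) :
  (u j2 - u j1) ^+ 2 <= 2 * \sum_j u j ^+ 2.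
Proof.
have [->|j12] := eqVneq j1 j2; first by rewrite subrr expr0n mulr_ge0 ?sum_sqr_ge0.
have two_terms : u j1 ^+ 2 + u j2 ^+ 2 <= \sum_j u j ^+ 2.
  rewrite (bigD1 j1) //= (bigD1 j2) 1?eq_sym //= addrA lerDl.
  by apply: sumr_ge0 => j _; exact: sqr_ge0.
by have := sqr_ge0 (u j1 + u j2); rewrite !expr2 in two_terms *; nra.
Qed.

Definition linearization_gap (C : nat) (Lab : Type) (ell : 'rV[R]_C -> Lab -> R)
  (g : 'rV[R]_C -> Lab -> 'rV[R]_C) (z : 'rV[R]_C) (c : Lab) (u : 'rV[R]_C) : R :=
  ell (z + u) c - ell z c - \sum_j g z c 0 j * u 0 j.

Definition convex_smooth (C : nat) (Lab : Type) (ell : 'rV[R]_C -> Lab -> R)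
  (g : 'rV[R]_C -> Lab -> 'rV[R]_C) (K : R) : Prop :=
  forall z c u, 0 <= linearization_gap ell g z c u <= K / 2 * \sum_j u 0 j ^+ 2.

Definition bce_grad (z : 'rV[R]_1) (c : bool) : 'rV[R]_1 := \row_j (sigm (z 0 0) - c%:R).

Definition ce_grad (C : nat) (z : 'rV[R]_C) (c : 'I_C) : 'rV[R]_C :=
  \row_j (expR (z 0 j) / \sum_k expR (z 0 k) - (j == c)%:R).

Lemma bceE (z : 'rV[R]_1) (c : bool) :
  bce z c = ln (1 + expR (- z 0 0)) + (1 - c%:R) * z 0 0.
Proof.
rewrite /bce /sigm; set x := z 0 0; set E := expR (- x).
have E_gt0 : 0 < E by exact: expR_gt0.
have E1_gt0 : 0 < 1 + E by lra.
have -> : 1 - (1 + E)^-1 = E / (1 + E) by field; rewrite gt_eqF.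
rewrite lnV ?posrE // ln_div ?posrE // /E expRK.
by ring.
Qed.

Lemma sum_expR_gt0 (C : nat) (i0 : 'I_C) (z : 'I_C -> R) : 0 < \sum_j expR (z j).
Proof.
rewrite (bigD1 i0) //=; apply: ltr_pwDl; first exact: expR_gt0.
by apply: sumr_ge0 => j _; exact: expR_ge0.
Qed.

Lemma ceE (C : nat) (z : 'rV[R]_C) (c : 'I_C) :
  ce z c = ln (\sum_j expR (z 0 j)) - z 0 c.
Proof.
rewrite /ce ln_div ?posrE ?expR_gt0 ?expRK ?(sum_expR_gt0 c) //.
by rewrite opprB addrC.
Qed.

Lemma bce_convex_smooth : convex_smooth (@bce R) bce_grad (4^-1).
Proof.
move=> z c u; rewrite /linearization_gap !bceE !big_ord1 !mxE.
set x := z 0 0; set w := u 0 0; set E := expR (- x).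
have E_gt0 : 0 < E by exact: expR_gt0.
set p := E / (1 + E).
have p01 : 0 <= p <= 1.
  by rewrite divr_ge0 ?ler_pdivrMr ?mul1r; lra.
have sigmE : sigm x = 1 - p by rewrite /sigm /p -/E; field; rewrite gt_eqF //; lra.
have mgf_gt0 : 0 < 1 - p + p * expR (- w).
  by have := expR_gt0 (- w); case/andP: p01 => p0 p1; nra.
have lnE : ln (1 + expR (- (x + w))) = ln (1 + E) + ln (1 - p + p * expR (- w)).
  have -> : 1 + expR (- (x + w)) = (1 + E) * (1 - p + p * expR (- w)).
    by rewrite opprD expRD -/E /p; field; rewrite gt_eqF //; lra.
  by rewrite lnM ?posrE //; lra.
rewrite lnE sigmE.
have -> : ln (1 + E) + ln (1 - p + p * expR (- w)) + (1 - c%:R) * (x + w) -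
    (ln (1 + E) + (1 - c%:R) * x) - (1 - p - c%:R) * w
    = ln (1 - p + p * expR (- w)) - p * - w by ring.
apply/andP; split.
  pose pb (b : bool) : R := if b then p else 1 - p.
  have pb_ge0 b : 0 <= pb b by case: b; rewrite /pb; lra.
  have pb_sum1 : \sum_b pb b = 1 by rewrite big_bool /=; lra.
  have := expR_mean_le pb_ge0 pb_sum1 (fun b => if b then - w else 0).
  rewrite !big_bool /= mulr0 addr0 expR0 mulr1 addrC -ler_ln ?posrE ?expR_gt0 // expRK.
  lra.
have := ln_bernoulli_mgf_le (- w) p01.
rewrite sqrrN; lra.
Qed.

Lemma ce_convex_smooth (C : nat) : convex_smooth (@ce R C) (@ce_grad C) (2^-1).
Proof.
move=> z c u; rewrite /linearization_gap !ceE.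
set S := \sum_k expR (z 0 k).
have S_gt0 : 0 < S := sum_expR_gt0 c (z 0).
pose p j := expR (z 0 j) / S.
have p_ge0 j : 0 <= p j by rewrite divr_ge0 ?expR_ge0 ?ltW.
have p_sum1 : \sum_j p j = 1 by rewrite -mulr_suml divff ?gt_eqF.
have shiftE : \sum_j expR ((z + u) 0 j) = S * \sum_j p j * expR (u 0 j).
  rewrite mulr_sumr; apply: eq_bigr => j _.
  by rewrite mxE expRD /p; field; rewrite gt_eqF.
have mgf_gt0 : 0 < \sum_j p j * expR (u 0 j).
  rewrite (bigD1 c) //=; apply: ltr_pwDl; first by rewrite mulr_gt0 ?divr_gt0 ?expR_gt0.
  by apply: sumr_ge0 => j _; rewrite mulr_ge0 ?expR_ge0.
have linE : \sum_j ce_grad z c 0 j * u 0 j = \sum_j p j * u 0 j - u 0 c.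
  under eq_bigr do rewrite mxE mulrBl.
  rewrite sumrB; congr (_ - _).
  by rewrite (bigD1 c) //= eqxx mul1r big1 ?addr0 // => j /negbTE ->; rewrite mul0r.
rewrite linE shiftE lnM ?posrE // mxE.
have -> : ln S + ln (\sum_j p j * expR (u 0 j)) - (z 0 c + u 0 c) - (ln S - z 0 c)
    - (\sum_j p j * u 0 j - u 0 c)
    = ln (\sum_j p j * expR (u 0 j)) - \sum_j p j * u 0 j by ring.
apply/andP; split.
  have := expR_mean_le p_ge0 p_sum1 (u 0).
  by rewrite -ler_ln ?posrE ?expR_gt0 // expRK subr_ge0.
have [j1 [j2 u_range]] := exists_argmin_argmax c (u 0).
have hoeffding := mean_expR_le_hoeffding p_ge0 p_sum1 u_range.
rewrite -ler_ln ?posrE ?expR_gt0 // expRK in hoeffding.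
have := sqrB_le_2sum_sqr (u 0) j1 j2.
lra.
Qed.

Lemma xent_loss_convex_smooth (C : nat) (Lab : Type) (ell : 'rV[R]_C -> Lab -> R) (K : R) :
  xent_loss ell K -> 0 <= K /\ exists g, convex_smooth ell g K.
Proof.
case=> [|C']; (split; first by rewrite invr_ge0).
  by exists bce_grad; exact: bce_convex_smooth.
by exists (@ce_grad C'); exact: ce_convex_smooth.
Qed.

End CrossEntropy.

Section SpectralNorm.
Variable R : realType.

Lemma vnorm_sqr (k : nat) (v : 'rV[R]_k) : vnorm v ^+ 2 = \sum_j v 0 j ^+ 2.
Proof. by rewrite sqr_sqrtr ?sum_sqr_ge0. Qed.

Lemma specnorm_has_ubound (d C : nat) (W : 'M[R]_(d, C)) :
  has_ubound [set r : R | exists v : 'rV[R]_d, vnorm v = 1 /\ r = vnorm (v *m W)].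
Proof.
exists (Num.sqrt (\sum_j (\sum_i `|W i j|) ^+ 2)) => _ [v [v1 ->]].
rewrite ler_sqrt ?sum_sqr_ge0 //; apply: ler_sum => j _.
have v_sum1 : \sum_i v 0 i ^+ 2 = 1 by rewrite -vnorm_sqr v1 expr1n.
have v_le1 i : `|v 0 i| <= 1.
  have : v 0 i ^+ 2 <= 1.
    by rewrite -v_sum1 (bigD1 i) //= lerDl sumr_ge0 // => l _; exact: sqr_ge0.
  by move=> vi2; rewrite ler_norml; apply/andP; split; nra.
have entry_le : `|(v *m W) 0 j| <= \sum_i `|W i j|.
  rewrite mxE; apply: le_trans (ler_norm_sum _ _ _) _; apply: ler_sum => i _.
  by rewrite normrM ler_piMl.
rewrite -real_normK ?num_real // lerXn2r ?nnegrE //.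
by apply: sumr_ge0.
Qed.

Lemma sum_sqr_mulmx_le (d C : nat) (W : 'M[R]_(d, C)) (v : 'rV[R]_d) :
  \sum_j (v *m W) 0 j ^+ 2 <= specnorm W ^+ 2 * \sum_i v 0 i ^+ 2.
Proof.
set s := \sum_i v 0 i ^+ 2.
have [s0|s_neq0] := eqVneq s 0.
  have -> : v = 0.
    apply/rowP => i; rewrite mxE; apply/eqP; rewrite -sqrf_eq0 eq_le sqr_ge0 andbT.
    by rewrite -s0 /s (bigD1 i) //= lerDl sumr_ge0 // => l _; exact: sqr_ge0.
  by rewrite mul0mx s0 mulr0 big1 // => j _; rewrite mxE expr0n.
have s_gt0 : 0 < s by rewrite lt_def s_neq0 sum_sqr_ge0.
pose k := (Num.sqrt s)^-1.
have k2s : k ^+ 2 * s = 1 by rewrite exprVn sqr_sqrtr ?mulVf ?ltW.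
have unit_kv : vnorm (k *: v) = 1.
  rewrite /vnorm (eq_bigr (fun i => k ^+ 2 * v 0 i ^+ 2)) => [|i _]; last by rewrite mxE exprMn.
  by rewrite -mulr_sumr k2s sqrtr1.
have kvW_le : vnorm ((k *: v) *m W) <= specnorm W.
  by apply: ub_le_sup; [exact: specnorm_has_ubound | exists (k *: v)].
have := lerXn2r 2 (sqrtr_ge0 _) (le_trans (sqrtr_ge0 _) kvW_le) kvW_le.
rewrite sqr_sqrtr ?sum_sqr_ge0 //.
under eq_bigr do rewrite -scalemxAl mxE exprMn.
rewrite -mulr_sumr => /(ler_wpM2r (ltW s_gt0)).
by rewrite mulrAC k2s mul1r.
Qed.

End SpectralNorm.

Section Concatenation.
Variable R : realType.

Lemma sum_mxvec_index (p q : nat) (F : 'I_(p * q) -> R) :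
  \sum_ij F ij = \sum_(i < p) \sum_(j < q) F (mxvec_index i j).
Proof.
rewrite (reindex (uncurry (@mxvec_index p q))); last exact: curry_mxvec_bij.
by rewrite pair_big /=; apply: eq_bigr => -[].
Qed.

Lemma eq_mxvec_index (p q : nat) (i i' : 'I_p) (j j' : 'I_q) :
  (mxvec_index i j == mxvec_index i' j') = (i == i') && (j == j').
Proof.
have := mxvecE (delta_mx i' j' : 'M[R]_(p, q)) i j.
rewrite mxvec_delta !mxE /= => /eqP.
by rewrite eqr_nat; case: (mxvec_index i j == _); case: (_ && _).
Qed.

Lemma concat_maskE (n nH dv : nat) (m : 'I_nH -> bool) (A : 'I_nH -> 'M[R]_(n, dv))
  t h k : concat_mask m A t (mxvec_index h k) = (m h)%:R * A h t k.
Proof. by rewrite !mxE mxvecE mxE. Qed.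

Lemma concat_perturb (n nH dv : nat) (A : 'I_nH -> 'M[R]_(n, dv)) h i k s :
  concat (perturb A h i k s) = concat A + s *: delta_mx i (mxvec_index h k).
Proof.
apply/matrixP => t ij; case/mxvec_indexP: ij => h' k'.
rewrite /concat concat_maskE [in RHS]mxE concat_maskE !mul1r /perturb.
have [->|hh'] := eqVneq h' h.
  by rewrite !mxE eq_mxvec_index eqxx.
by rewrite !mxE eq_mxvec_index (negbTE hh') andbF mulr0 addr0.
Qed.

Lemma row_delta_mulmx (n d C : nat) (t i : 'I_n) (j : 'I_d) (W : 'M[R]_(d, C)) :
  row t (delta_mx i j) *m W = (t == i)%:R *: row j W.
Proof. by rewrite rowE mul_delta_mx_cond -scaler_nat -scalemxAl -rowE. Qed.

Lemma row_concat_perturb (n nH dv C : nat) (W : 'M[R]_(nH * dv, C))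
    (A : 'I_nH -> 'M[R]_(n, dv)) h i k s t :
  row t (concat (perturb A h i k s)) *m W =
  row t (concat A) *m W + (s * (t == i)%:R) *: row (mxvec_index h k) W.
Proof.
by rewrite concat_perturb linearD linearZ /= mulmxDl -scalemxAl row_delta_mulmx scalerA.
Qed.

End Concatenation.

Section HeadGradients.
Variables (R : realType) (n nH dv C : nat) (Lab : Type) (ell : 'rV[R]_C -> Lab -> R).
Variables (W : 'M[R]_(nH * dv, C)) (c : 'I_n -> Lab).
Variables (g : 'rV[R]_C -> Lab -> 'rV[R]_C) (K : R).
Hypothesis smooth : convex_smooth ell g K.

Lemma grad_headE (A : 'I_nH -> 'M[R]_(n, dv)) h i k :
  grad_head ell W c A h i k =
    \sum_j g (row i (concat A) *m W) (c i) 0 j * W (mxvec_index h k) j.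
Proof.
(* [grad_head] is a [derive1], a junk value unless the derivative exists; the two-sided
   quadratic bound on the linearization gap provides it. *)
rewrite /grad_head mxE.
set w := row (mxvec_index h k) W; pose Z t := row t (concat A) *m W.
have n_neq0 : n%:R != 0 :> R by rewrite pnatr_eq0 -lt0n (leq_ltn_trans _ (ltn_ord i)).
have lossE s : loss ell W c (concat (perturb A h i k s)) =
    n%:R^-1 * (ell (Z i + s *: w) (c i) + \sum_(t | t != i) ell (Z t) (c t)).
  rewrite /loss; congr (_ * _); under eq_bigr do rewrite row_concat_perturb.
  rewrite (bigD1 i) //= eqxx mulr1; congr (_ + _).
  by apply: eq_bigr => t /negbTE ->; rewrite mulr0 scale0r addr0.
set a := \sum_j g (Z i) (c i) 0 j * w 0 j.
rewrite (@derive1_quadratic_remainder _ _ (n%:R^-1 * a)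
                                         (n%:R^-1 * (K / 2 * \sum_j w 0 j ^+ 2))).
  by rewrite mulrA divff // mul1r; apply: eq_bigr => j _; rewrite mxE.
move=> s; rewrite !lossE scale0r addr0.
have /andP[gap_ge0 gap_le] := smooth (Z i) (c i) (s *: w).
have gapE : linearization_gap ell g (Z i) (c i) (s *: w) =
    ell (Z i + s *: w) (c i) - ell (Z i) (c i) - s * a.
  rewrite /linearization_gap /a mulr_sumr; congr (_ - _).
  by apply: eq_bigr => j _; rewrite mxE mulrCA.
have sqrE : \sum_j (s *: w) 0 j ^+ 2 = s ^+ 2 * \sum_j w 0 j ^+ 2.
  by rewrite mulr_sumr; apply: eq_bigr => j _; rewrite mxE exprMn.
rewrite gapE sqrE in gap_ge0 gap_le.
have n_inv_ge0 : 0 <= n%:R^-1 :> R by rewrite invr_ge0.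
rewrite [X in `|X|](_ : _ = n%:R^-1 * (ell (Z i + s *: w) (c i) - ell (Z i) (c i) - s * a));
  last by ring.
rewrite normrM ger0_norm // ger0_norm //.
rewrite [X in _ <= X](_ : _ = n%:R^-1 * (K / 2 * (s ^+ 2 * \sum_j w 0 j ^+ 2))); last by ring.
exact: ler_wpM2l.
Qed.

Definition head_block (V : 'M[R]_(n, nH * dv)) (h : 'I_nH) : 'M[R]_(n, dv) :=
  \matrix_(t, k) V t (mxvec_index h k).

Lemma frob_innerZr (p q : nat) (U V : 'M[R]_(p, q)) (a : R) :
  frob_inner U (a *: V) = a * frob_inner U V.
Proof.
rewrite /frob_inner mulrCA; congr (_ * _); rewrite mulr_sumr; apply: eq_bigr => t _.
by rewrite mulr_sumr; apply: eq_bigr => k _; rewrite mxE mulrCA.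
Qed.

Lemma loss_sub_le (Y Y' : 'M[R]_(n, nH * dv)) :
  loss ell W c Y' - loss ell W c Y <= n%:R^-1 * \sum_t
    (\sum_j g (row t Y *m W) (c t) 0 j * (row t (Y' - Y) *m W) 0 j
     + K / 2 * \sum_j (row t (Y' - Y) *m W) 0 j ^+ 2).
Proof.
rewrite /loss -mulrBr -sumrB; apply: ler_wpM2l; first by rewrite invr_ge0.
apply: ler_sum => t _.
have /andP[_] := smooth (row t Y *m W) (c t) (row t (Y' - Y) *m W).
by rewrite /linearization_gap linearB /= mulmxBl subrKC; lra.
Qed.

Lemma grad_pairingE (A : 'I_nH -> 'M[R]_(n, dv)) (V : 'M[R]_(n, nH * dv)) :
  n%:R^-1 * \sum_t \sum_j g (row t (concat A) *m W) (c t) 0 j * (row t V *m W) 0 j =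
  \sum_h frob_inner (grad_head ell W c A h) (head_block V h).
Proof.
rewrite /frob_inner -mulr_sumr [in RHS]exchange_big /=; congr (_ * _); apply: eq_bigr => t _.
under eq_bigr do rewrite mxE sum_mxvec_index mulr_sumr.
rewrite exchange_big /=; apply: eq_bigr => h _.
under eq_bigr do rewrite mulr_sumr.
rewrite exchange_big /=; apply: eq_bigr => k _.
rewrite grad_headE mulr_suml !mxE; apply: eq_bigr => j _.
by rewrite mulrCA; exact: mulrC.
Qed.

Lemma sum_sqr_row_mulmx_le (V : 'M[R]_(n, nH * dv)) t :
  \sum_j (row t V *m W) 0 j ^+ 2 <=
  specnorm W ^+ 2 * \sum_h \sum_k head_block V h t k ^+ 2.
Proof.
have -> : \sum_h \sum_k head_block V h t k ^+ 2 = \sum_ij row t V 0 ij ^+ 2.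
  by rewrite sum_mxvec_index; apply: eq_bigr => h _; apply: eq_bigr => k _; rewrite !mxE.
exact: sum_sqr_mulmx_le.
Qed.

Lemma head_block_mask_sub (m : 'I_nH -> bool) (A : 'I_nH -> 'M[R]_(n, dv)) h :
  head_block (concat_mask m A - concat A) h = - (1 - (m h)%:R) *: A h.
Proof.
apply/matrixP => t k; rewrite mxE [in LHS]mxE [X in _ + X]mxE /concat !concat_maskE.
by rewrite [RHS]mxE; case: (m h) => /=; ring.
Qed.

Lemma loss_mask_sub_le (A : 'I_nH -> 'M[R]_(n, dv)) (m : 'I_nH -> bool) : 0 <= K ->
  loss ell W c (concat_mask m A) - loss ell W c (concat A) <=
  \sum_h (1 - (m h)%:R) * `| frob_inner (grad_head ell W c A h) (A h) |
  + K / 2 * specnorm W ^+ 2 * \sum_h (1 - (m h)%:R) * frob_norm2 (A h).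
Proof.
move=> K_ge0; set V := concat_mask m A - concat A.
have b_ge0 h : 0 <= 1 - (m h)%:R :> R by case: (m h) => /=; lra.
have b_sqr h : (1 - (m h)%:R) ^+ 2 = 1 - (m h)%:R :> R by case: (m h) => /=; ring.
apply: le_trans (loss_sub_le (concat A) (concat_mask m A)) _.
rewrite -/V big_split /= mulrDr grad_pairingE; apply: lerD.
  apply: ler_sum => h _; rewrite head_block_mask_sub frob_innerZr mulNr -mulrN.
  by rewrite ler_wpM2l // -normrN ler_norm.
have n_inv_ge0 : 0 <= n%:R^-1 :> R by rewrite invr_ge0.
have K2_ge0 : 0 <= K / 2 by lra.
apply: (@le_trans _ _ (n%:R^-1 * \sum_t K / 2 *
    (specnorm W ^+ 2 * \sum_h \sum_k head_block V h t k ^+ 2))).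
  by rewrite ler_wpM2l // ler_sum // => t _; rewrite ler_wpM2l // sum_sqr_row_mulmx_le.
have quadE : n%:R^-1 * \sum_t \sum_h \sum_k head_block V h t k ^+ 2 =
    \sum_h (1 - (m h)%:R) * frob_norm2 (A h).
  rewrite exchange_big mulr_sumr; apply: eq_bigr => h _.
  rewrite /frob_norm2 /frob_inner mulrCA; congr (_ * _); rewrite mulr_sumr.
  apply: eq_bigr => t _; rewrite mulr_sumr; apply: eq_bigr => k _.
  by rewrite head_block_mask_sub mxE exprMn sqrrN b_sqr expr2.
by rewrite -quadE -!mulr_sumr [leLHS]mulrCA [X in _ * X]mulrCA mulrA.
Qed.

End HeadGradients.

Section LinearCombination.
Context (R : realType) (d : measure_display) (T : measurableType d).
Variables (mu : {measure set T -> \bar R}) (D : set T) (mD : measurable D).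

Lemma integrable_scale (a : R) (g : T -> R) : mu.-integrable D (EFin \o g) ->
  mu.-integrable D (EFin \o (fun x => a * g x)).
Proof.
move=> g_int; apply: eq_integrable mD _ _ _ (integrableZl mD a g_int) => x _.
by rewrite /= EFinM.
Qed.

Lemma integrableRD (f g : T -> R) :
  mu.-integrable D (EFin \o f) -> mu.-integrable D (EFin \o g) ->
  mu.-integrable D (EFin \o (fun x => f x + g x)).
Proof.
move=> f_int g_int; apply: eq_integrable mD _ _ _ (integrableD mD f_int g_int) => x _.
by rewrite /= EFinD.
Qed.

Lemma integrableRB (f g : T -> R) :
  mu.-integrable D (EFin \o f) -> mu.-integrable D (EFin \o g) ->
  mu.-integrable D (EFin \o (fun x => f x - g x)).
Proof.
move=> f_int g_int; apply: eq_integrable mD _ _ _ (integrableB mD f_int g_int) => x _.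
by rewrite /= EFinB.
Qed.

Variables (I : Type) (a : I -> R) (f : I -> T -> R).
Hypothesis f_int : forall i, mu.-integrable D (EFin \o f i).

Lemma integrable_lin_comb (s : seq I) :
  mu.-integrable D (EFin \o (fun x => \sum_(i <- s) a i * f i x)).
Proof.
have af_int i : mu.-integrable D (EFin \o (fun x => a i * f i x)).
  exact: integrable_scale.
apply: eq_integrable mD _ _ _ (integrable_sum mD (P := xpredT) s (fun i _ => af_int i)) => x _.
by rewrite /= sumEFin.
Qed.

Lemma Rintegral_lin_comb (s : seq I) :
  \int[mu]_(x in D) (\sum_(i <- s) a i * f i x) = \sum_(i <- s) a i * \int[mu]_(x in D) f i x.
Proof.
elim: s => [|i s IH].
  by under eq_Rintegral do rewrite big_nil; rewrite big_nil Rintegral_cst // mul0r.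
under eq_Rintegral do rewrite big_cons.
by rewrite RintegralD ?integrable_lin_comb ?integrable_scale // RintegralZl // IH big_cons.
Qed.

End LinearCombination.

Theorem mainTheorem4 (R : realType) (dsp : measure_display) (X : measurableType dsp)
  (P : probability X R) (n nH dv C : nat) (Lab : Type)
  (ell : 'rV[R]_C -> Lab -> R) (cst : R) (Hell : xent_loss ell cst)
  (W : 'M[R]_(nH * dv, C)) (lab : X -> 'I_n -> Lab)
  (A : X -> 'I_nH -> 'M[R]_(n, dv)) (m : 'I_nH -> bool) :
  P.-integrable setT (fun x => (loss ell W (lab x) (concat (A x)))%:E) ->
  P.-integrable setT (fun x => (loss ell W (lab x) (concat_mask m (A x)))%:E) ->
  (forall h, P.-integrable setT
     (fun x => (`| frob_inner (grad_head ell W (lab x) (A x) h) (A x h) |)%:E)) ->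
  (forall h, P.-integrable setT (fun x => (frob_norm2 (A x h))%:E)) ->
  Rintegral P setT (fun x => loss ell W (lab x) (concat_mask m (A x))
                             - loss ell W (lab x) (concat (A x)))
  <= \sum_(h < nH) (1 - (m h)%:R) *
        Rintegral P setT
          (fun x => `| frob_inner (grad_head ell W (lab x) (A x) h) (A x h) |)
     + cst / 2 * specnorm W ^+ 2 *
       \sum_(h < nH) (1 - (m h)%:R) * Rintegral P setT (fun x => frob_norm2 (A x h)).
Proof.
move=> loss_int mask_int grad_int norm_int.
have [cst_ge0 [g smooth]] := xent_loss_convex_smooth Hell.
have pointwise x (_ : setT x) := loss_mask_sub_le W (lab x) smooth (A x) m cst_ge0.
have grad_sum_int := integrable_lin_comb measurableT (fun h => 1 - (m h)%:R) grad_int.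
have norm_sum_int := integrable_lin_comb measurableT (fun h => 1 - (m h)%:R) norm_int.
have norm_term_int :=
  integrable_scale measurableT (cst / 2 * specnorm W ^+ 2) (norm_sum_int (index_enum _)).
apply: le_trans (le_Rintegral measurableT _ _ pointwise) _.
- exact: integrableRB.
- exact: integrableRD.
by rewrite RintegralD // RintegralZl // !Rintegral_lin_comb.
Qed.
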